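(* Let $\mathbb{F}$ be a field with $\mathrm{char}(\mathbb{F})\neq 2,3$, let $k\in\mathbb{N}$ and $\beta_3,\dots,\beta_{3k}\in\mathbb{F}$ with $\beta_{3k}\neq0$, and let $x=\sum_{j=1}^k\beta_{3j}p_{\bar1,3j}$. Then the ideal $I=(x)$ of $\hat{\mathcal{H}}$ generated by $x$ has basis $$x,\quad x^{\tau_0},\quad s_ix,\quad (s_ix)^{\tau_0}\qquad (i\in3\mathbb{N}).$$
   Context: Notation: $\mathbb{N}=\{1,2,3,\dots\}$, $3\mathbb{N}=\{3,6,9,\dots\}$; for $r\in\mathbb{Z}$, $\bar r=r+3\mathbb{Z}\in\mathbb{Z}_3$. The algebra $\hat{\mathcal{H}}$ is the commutative $\mathbb{F}$-algebra with basis $\{a_i:i\in\mathbb{Z}\}\cup\{s_j:j\in\mathbb{N}\}\cup\{p_{\bar r,k}:\bar r\in\{\bar1,\bar2\},\ k\in 3\mathbb{N}\}$, where $s_0=0$, $p_{\bar r,j}=0$ for all $\bar r$ whenever $j\notin 3\mathbb{N}$, $p_{\bar 0,j}=-p_{\bar1,j}-p_{\bar2,j}$, $z_{\bar r,j}=p_{\bar r+\bar1,j}-p_{\bar r-\bar1,j}$, and for $i,i'\in\mathbb{Z}$, $j,l\in\mathbb{N}$, $h,k\in3\mathbb{N}$, $\bar r,\bar t\in\mathbb{Z}_3$: (H1) $a_ia_{i'}=\tfrac12(a_i+a_{i'})+s_{|i-i'|}+z_{\bar\imath,|i-i'|}$; (H2) $a_is_j=-\tfrac34a_i+\tfrac38(a_{i-j}+a_{i+j})+\tfrac32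 s_j-z_{\bar\imath,j}$; (H3) $a_ip_{\bar r,k}=\tfrac32p_{\bar r,k}-p_{-(\bar\imath+\bar r),k}$; (H4) $s_js_l=\tfrac34(s_j+s_l)-\tfrac38(s_{|j-l|}+s_{j+l})$; (H5) $s_jp_{\bar r,k}=\tfrac34(p_{\bar r,j}+p_{\bar r,k})-\tfrac38(p_{\bar r,|j-k|}+p_{\bar r,j+k})$; (H6) $p_{\bar r,h}p_{\bar t,k}=\tfrac14(z_{-(\bar r+\bar t),h}+z_{-(\bar r+\bar t),k})-\tfrac18(z_{-(\bar r+\bar t),|h-k|}+z_{-(\bar r+\bar t),h+k})$. $\tau_0$ denotes the automorphism of $\hat{\mathcal{H}}$ given by $a_i\mapsto a_{-i}$, $s_j\mapsto s_j$, $p_{\bar r,k}\mapsto -p_{-\bar r,k}$, and $y^{\tau_0}$ is the image of $y$. *)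

From HB Require Import structures.
From mathcomp Require Import all_boot all_order all_algebra.
From mathcomp Require Import finmap.
From mathcomp Require Import monalg.
Set Implicit Arguments. Unset Strict Implicit. Unset Printing Implicit Defensive.
Import Order.TTheory GRing.Theory Num.Theory.
Local Open Scope ring_scope.

(* Basis index of \hat H:
     inl (inl i)      <-> a_i            (i : int)
     inl (inr n)      <-> s_(n+1)        (so every j in N = {1,2,...})
     inr (true, n)    <-> p_(1bar, 3(n+1))
     inr (false, n)   <-> p_(2bar, 3(n+1))                              *)
Definition HB : choiceType := ((int + nat) + (bool * nat))%type.

Section Highwater.
Variable F : fieldType.

Definition Hh := {malg F[HB]}.

Definition bvec (b : HB) : Hh := << b >>.

Definition ha (i : int) : Hh := bvec (inl (inl i)).
(* s_j, with the convention s_0 = 0 *)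
Definition hs (j : nat) : Hh := if j == 0%N then 0 else bvec (inl (inr j.-1)).
(* p_(rbar, j) for r : int read modulo 3; p_(rbar,j) = 0 unless j in 3N,
   and p_(0bar,j) = - p_(1bar,j) - p_(2bar,j) *)
Definition hp (r : int) (j : nat) : Hh :=
  if (0 < j)%N && (3 %| j)%N then
    let p1 := bvec (inr (true, (j %/ 3).-1)) in
    let p2 := bvec (inr (false, (j %/ 3).-1)) in
    if (r %% 3)%Z == 1 then p1
    else if (r %% 3)%Z == 2 then p2
    else - p1 - p2
  else 0.
Definition hz (r : int) (j : nat) : Hh := hp (r + 1) j - hp (r - 1) j.

Definition absz_diff (i i' : int) : nat := `|i - i'|%N.
Definition pidx (b : bool) : int := if b then 1 else 2.

Definition half : F := 2%:R^-1.

(* products of basis elements, (H1)-(H6) *)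
Definition bmul (b c : HB) : Hh :=
  match b, c with
  | inl (inl i), inl (inl i') =>
      half *: (ha i + ha i') + hs (absz_diff i i') + hz i (absz_diff i i')
  | inl (inl i), inl (inr n) | inl (inr n), inl (inl i) =>
      let j := n.+1 in
      - ((3%:R / 4%:R) *: ha i)
      + (3%:R / 8%:R) *: (ha (i - j%:Z) + ha (i + j%:Z))
      + (3%:R / 2%:R) *: hs j - hz i j
  | inl (inl i), inr (b, n) | inr (b, n), inl (inl i) =>
      let k := (3 * n.+1)%N in
      (3%:R / 2%:R) *: hp (pidx b) k - hp (- (i + pidx b)) k
  | inl (inr n), inl (inr m) =>
      let j := n.+1 in let l := m.+1 in
      (3%:R / 4%:R) *: (hs j + hs l)
      - (3%:R / 8%:R) *: (hs (absz_diff j l) + hs (j + l))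
  | inl (inr n), inr (b, m) | inr (b, m), inl (inr n) =>
      let j := n.+1 in let k := (3 * m.+1)%N in let r := pidx b in
      (3%:R / 4%:R) *: (hp r j + hp r k)
      - (3%:R / 8%:R) *: (hp r (absz_diff j k) + hp r (j + k))
  | inr (b, n), inr (c, m) =>
      let h := (3 * n.+1)%N in let k := (3 * m.+1)%N in
      let u := - (pidx b + pidx c) in
      (4%:R^-1) *: (hz u h + hz u k)
      - (8%:R^-1) *: (hz u (absz_diff h k) + hz u (h + k))
  end.

Definition hmul (u v : Hh) : Hh :=
  \sum_(b <- msupp u) \sum_(c <- msupp v) (u@_b * v@_c) *: bmul b c.

Definition btau (b : HB) : Hh :=
  match b with
  | inl (inl i) => ha (- i)
  | inl (inr n) => bvec (inl (inr n))
  | inr (b, n) => - bvec (inr (~~ b, n))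
  end.
Definition htau (u : Hh) : Hh := \sum_(b <- msupp u) u@_b *: btau b.

(* ideals of the (commutative, possibly non-unital) algebra \hat H *)
Definition is_ideal (J : Hh -> Prop) : Prop :=
  [/\ J 0,
      (forall u v, J u -> J v -> J (u + v)),
      (forall (c : F) u, J u -> J (c *: u)) &
      (forall u v, J u -> J (hmul v u))].

Definition gen_ideal (x : Hh) (y : Hh) : Prop :=
  forall J, is_ideal J -> J x -> J y.

Definition lin_indep (I : eqType) (f : I -> Hh) : Prop :=
  forall (l : seq I) (c : I -> F), uniq l ->
    \sum_(t <- l) c t *: f t = 0 -> forall t, t \in l -> c t = 0.

Definition in_span (I : eqType) (f : I -> Hh) (y : Hh) : Prop :=
  exists (l : seq I) (c : I -> F), y = \sum_(t <- l) c t *: f t.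

Definition is_basis_of_ideal (I : eqType) (f : I -> Hh) (x : Hh) : Prop :=
  lin_indep f /\ (forall y, in_span f y <-> gen_ideal x y).

(* the family x, x^tau0, s_i x, (s_i x)^tau0 (i in 3N);
   index (false/true, None) -> x / x^tau0,
         (false/true, Some n) -> s_(3(n+1)) x / (s_(3(n+1)) x)^tau0 *)
Definition ideal_family (x : Hh) (t : bool * option nat) : Hh :=
  let y := match t.2 with
           | None => x
           | Some n => hmul (hs (3 * n.+1)) x
           end in
  if t.1 then htau y else y.

End Highwater.

From HB Require Import structures.
From mathcomp Require Import all_boot all_order all_algebra.
From mathcomp Require Import finmap monalg.
From mathcomp Require Import zify ring.
Set Implicit Arguments. Unset Strict Implicit. Unset Printing Implicit Defensive.
Import Order.TTheory GRing.Theory Num.Theory.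
Local Open Scope ring_scope.

(* Let P be the span of the p_(1bar,k), so that x lies in P.  The linear maps
   pmap r : p_(1bar,k) |-> p_(rbar,k) satisfy pmap 1 = id and pmap 2 = - tau0
   on P, and for y in P the rules (H3), (H5), (H6) become
     a_i (pmap r y) = 3/2 pmap r y - pmap (-(i + r)) y,
     s_j (pmap r y) = pmap r (s_j y),
     p_(cbar,h) (pmap r y) = 1/3 (pmap (u + 1) - pmap (u - 1)) (s_h y)
                               with u = -(c + r).
   On P, s_j acts as 3/4 when 3 does not divide j, and the s_(3a) satisfy the
   Chebyshev-like recursion s_(3a) s_(3b) = 3/4 (s_(3a) + s_(3b))
   - 3/8 (s_(3|a-b|) + s_(3(a+b))).  So all pmap r (s_j x) and pmap r (s_j s_i x)
   lie in the span W of the family, hence W is stable under multiplication by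
   basis elements: W is an ideal.  Conversely x^tau0 = a_0 x - 3/2 x, so W lies
   in (x).  Independence is triangularity: the top monomial of s_(3(n+1)) x is
   p_(1bar,3(n+1+k)) with coefficient -3/8 beta_k, that of x is p_(1bar,3k),
   and tau0 moves them to the 2bar component. *)

Section LinearExtension.
Variables (R : comNzRingType) (K : choiceType) (V : lmodType R).

Definition linext (G : K -> V) (u : {malg R[K]}) : V :=
  \sum_(k <- msupp u) u@_k *: G k.

Lemma linext_supp G u (dom : seq K) : uniq dom -> {subset msupp u <= dom} ->
  linext G u = \sum_(k <- dom) u@_k *: G k.
Proof.
move=> udom sub; rewrite [RHS](bigID (mem (msupp u))) /=.
rewrite [X in _ + X]big1 ?addr0 => [|k /mcoeff_outdom ->]; last by rewrite scale0r.
rewrite -[RHS]big_filter; apply: perm_big; apply: uniq_perm.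
- exact: fset_uniq.
- exact: filter_uniq.
by move=> k; rewrite mem_filter andb_idr //; apply: sub.
Qed.

Lemma linext_is_linear G : linear (linext G).
Proof.
move=> a u v; set dom := undup (msupp u ++ msupp v ++ msupp (a *: u + v)).
rewrite !(@linext_supp G _ dom) ?undup_uniq //;
  try by move=> k kw; rewrite mem_undup !mem_cat kw ?orbT.
rewrite scaler_sumr -big_split; apply: eq_bigr => k _.
by rewrite mcoeffD mcoeffZ scalerDl scalerA.
Qed.

HB.instance Definition _ G :=
  GRing.isLinear.Build R {malg R[K]} V *:%R (linext G) (linext_is_linear G).

Lemma linextU G k : linext G << k >> = G k.
Proof.
rewrite (@linext_supp G _ [:: k]) ?big_seq1 ?mcoeffUU ?scale1r //.
by move=> k'; rewrite msuppU oner_eq0 !inE.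
Qed.

Lemma monalgUZ c k : << c *g k >> = c *: << k >> :> {malg R[K]}.
Proof. by apply/malgP => k'; rewrite mcoeffZ !mcoeffU mulr_natr. Qed.

Lemma linextE (f : {malg R[K]} -> V) : linear f -> f =1 linext (fun k => f << k >>).
Proof.
move=> fL u; pose lf : {linear _ -> V} := HB.pack f (GRing.isLinear.Build _ _ _ _ f fL).
transitivity (lf u) => //; rewrite {1}(monalgE u) linear_sum.
by apply: eq_bigr => k _; rewrite monalgUZ linearZ.
Qed.

End LinearExtension.

Lemma mcoeff_linext (R : comNzRingType) (K : choiceType) (G : K -> {malg R[K]}) u k :
  (linext G u)@_k = \sum_(k' <- msupp u) u@_k' * (G k')@_k.
Proof. by rewrite /linext raddf_sum; apply: eq_bigr => k' _; rewrite /= mcoeffZ. Qed.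

Lemma perm_absz_pm (a : nat) (u : int) :
  perm_eq [:: absz_diff a (absz u); (a + absz u)%N] [:: absz (a%:Z - u); absz (a%:Z + u)].
Proof.
rewrite /absz_diff; case: u => n /=; first exact: perm_refl.
rewrite -(perm_rot 1) /= (_ : absz (a%:Z + Negz n) = absz (a%:Z - n.+1)) //; lia.
Qed.

Lemma perm_absz_diff3 (a b d : nat) :
  perm_eq [:: absz_diff a (absz_diff b d); (a + absz_diff b d)%N; absz_diff a (b + d)%N]
          [:: absz_diff (absz_diff a b) d; (absz_diff a b + d)%N; absz_diff (a + b)%N d].
Proof.
have L := perm_absz_pm a (b%:Z - d%:Z).
rewrite -(perm_cat2r [:: absz_diff a (b + d)%N]) /= in L.
have R := perm_absz_pm d (a%:Z - b%:Z).
rewrite -(perm_cat2r [:: absz_diff (a + b)%N d]) /= in R.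
have -> : absz_diff (absz_diff a b) d = absz_diff d (absz_diff a b) by rewrite /absz_diff; lia.
rewrite [(absz_diff a b + d)%N]addnC; apply: (@perm_trans _ _ _ _ L); rewrite perm_sym.
apply: (@perm_trans _ _ _ _ R); rewrite perm_sym -(perm_rot 2) /absz_diff.
have -> : absz (a%:Z - (b%:Z - d%:Z))%R = absz (d%:Z + (a%:Z - b%:Z))%R by lia.
have -> : absz (a%:Z + (b%:Z - d%:Z))%R = absz ((a + b)%N%:Z - d%:Z)%R by lia.
have -> : absz (a%:Z - (b + d)%N%:Z)%R = absz (d%:Z - (a%:Z - b%:Z))%R by lia.
exact: perm_refl.
Qed.

Section Span.
Variables (F : fieldType) (I : Type) (f : I -> Hh F).

Definition span_seq (v : Hh F) : Prop :=
  exists L : seq (I * F), v = \sum_(p <- L) p.2 *: f p.1.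

Lemma span_seq0 : span_seq 0.
Proof. by exists [::]; rewrite big_nil. Qed.

Lemma span_seq_f t : span_seq (f t).
Proof. by exists [:: (t, 1)]; rewrite big_seq1 scale1r. Qed.

Lemma span_seqD u v : span_seq u -> span_seq v -> span_seq (u + v).
Proof. by move=> [L1 ->] [L2 ->]; exists (L1 ++ L2); rewrite big_cat. Qed.

Lemma span_seqZ a u : span_seq u -> span_seq (a *: u).
Proof.
move=> [L ->]; exists [seq (p.1, a * p.2) | p <- L].
by rewrite big_map scaler_sumr; apply: eq_bigr => p _; rewrite scalerA.
Qed.

Lemma span_seqB u v : span_seq u -> span_seq v -> span_seq (u - v).
Proof. by move=> su sv; apply: span_seqD su _; rewrite -scaleN1r; apply: span_seqZ. Qed.

Lemma span_seq_sum (J : Type) (s : seq J) (g : J -> Hh F) :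
  (forall j, span_seq (g j)) -> span_seq (\sum_(j <- s) g j).
Proof.
move=> sg; elim: s => [|j s IH]; first by rewrite big_nil; exact: span_seq0.
by rewrite big_cons; apply: span_seqD.
Qed.

End Span.

Lemma in_spanP (F : fieldType) (I : eqType) (f : I -> Hh F) v :
  in_span f v <-> span_seq f v.
Proof.
split=> [[l [c ->]] | [L ->]].
  by apply: span_seq_sum => t; apply/span_seqZ/span_seq_f.
exists (undup (map fst L)), (fun t => \sum_(p <- L | p.1 == t) p.2).
under [RHS]eq_bigr do rewrite scaler_suml.
rewrite (exchange_big_dep predT) //=; apply: eq_big_seq => p pL.
rewrite -big_filter (_ : [seq i <- _ | _] = [:: p.1]) ?big_seq1 //.
rewrite -(@filter_pred1_uniq _ (undup (map fst L)) p.1) ?undup_uniq ?mem_undup ?map_f //.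
by apply: eq_filter => i /=; rewrite eq_sym.
Qed.

Lemma triangular_lin_indep (F : fieldType) (I : eqType) (f : I -> Hh F)
    (lead : I -> HB) (deg : I -> nat) :
  (forall t, (f t)@_(lead t) != 0) ->
  (forall t t', t != t' -> (deg t <= deg t')%N -> (f t)@_(lead t') = 0) ->
  lin_indep f.
Proof.
move=> f_lead f_tri l c ul sum0.
have key t : t \in l -> {in l, forall t', (deg t < deg t')%N -> c t' = 0} -> c t = 0.
  move=> tl ct; move/(congr1 (mcoeff (lead t))): sum0.
  rewrite mcoeff0 raddf_sum (bigD1_seq t) //= big1_seq ?addr0 => [|t' /andP[t't t'l]].
    by rewrite mcoeffZ => /eqP; rewrite mulf_eq0 (negbTE (f_lead t)) orbF => /eqP.
  rewrite mcoeffZ; have [lt|le] := ltnP (deg t) (deg t'); first by rewrite ct ?mul0r.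
  by rewrite f_tri ?mulr0 // eq_sym.
pose D := (\max_(t <- l) deg t)%N.
have le_D t : t \in l -> (deg t <= D)%N by move=> tl; apply: leq_bigmax_seq.
suff main n t : t \in l -> (D - deg t <= n)%N -> c t = 0 by move=> t tl; exact: (main _ t tl).
elim: n t => [|n IH] t tl tD; apply: key => // t' t'l lt.
  by have := le_D t' t'l; lia.
by apply: IH => //; lia.
Qed.

(* Identities between linear combinations in Hh are checked coefficientwise:
   coef_eq builds, by recursion on the syntax of E and without unfolding any
   atom, a proof that the coefficient of E is the matching combination of the
   coefficients of its atoms; these are then generalized, leaving an identity
   in the field of scalars. *)
Ltac coef_eq k E :=
  lazymatch E with
  | ?x + ?y => let p1 := coef_eq k x in let p2 := coef_eq k y in
      constr:(eq_trans (mcoeffD k x y) (f_equal2 (fun a b => a + b) p1 p2))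
  | - ?x => let p := coef_eq k x in
      constr:(eq_trans (mcoeffN k x) (f_equal (fun a => - a) p))
  | ?c *: ?x => let p := coef_eq k x in
      constr:(eq_trans (mcoeffZ c x k) (f_equal (fun a => c * a) p))
  | 0 => constr:((mcoeff0 k) : mcoeff k E = 0)
  | _ => constr:(erefl (mcoeff k E))
  end.

Ltac lincomb_coef :=
  apply/malgP => ?;
  match goal with |- mcoeff ?k ?L = mcoeff ?k ?R =>
    let pL := coef_eq k L in let pR := coef_eq k R in
    refine (eq_trans pL (eq_trans _ (esym pR))) end;
  repeat match goal with |- context [mcoeff ?k ?v] =>
    let c := fresh "c" in generalize (mcoeff k v) => c end.

Section Highwater.
Variable F : fieldType.
Local Notation H := (Hh F).
Local Notation hp := (hp F).
Local Notation bvec := (bvec F).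
Local Notation p1 n := (bvec (inr (true, n))).
Local Notation sm j := (hmul (hs F j)).
Local Notation q n := (hp 1 (3 * n)).

Lemma hmulE u v : hmul u v = linext (fun b => linext (bmul F b) v) u.
Proof.
by apply: eq_bigr => b _; rewrite scaler_sumr; apply: eq_bigr => c _; rewrite scalerA.
Qed.

Lemma hmul_bvecl b v : hmul (bvec b) v = linext (bmul F b) v.
Proof. by rewrite hmulE linextU. Qed.

Lemma hmul_bvec b c : hmul (bvec b) (bvec c) = bmul F b c.
Proof. by rewrite hmul_bvecl linextU. Qed.

Lemma hmul_is_linear (u : H) : linear (hmul u).
Proof.
move=> a v w; rewrite !hmulE scaler_sumr -big_split; apply: eq_bigr => b _ /=.
by rewrite linearP scalerDr !scalerA mulrC.
Qed.

HB.instance Definition _ (u : H) :=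
  GRing.isLinear.Build F H H *:%R (hmul u) (hmul_is_linear u).

Lemma hmul_linextl (u v : H) : hmul u v = linext (fun b => hmul (bvec b) v) u.
Proof. by rewrite hmulE; apply: eq_bigr => b _; rewrite hmul_bvecl. Qed.

Lemma hmul0l (v : H) : hmul 0 v = 0.
Proof. by rewrite hmulE linear0. Qed.

HB.instance Definition _ := GRing.Linear.copy (@htau F) (linext (btau F)).

Lemma htau_bvec b : htau (bvec b) = btau F b.
Proof. exact: linextU. Qed.

Lemma htau_coef (v : H) c n : (htau v)@_(inr (c, n)) = - v@_(inr (~~ c, n)).
Proof.
rewrite mcoeff_linext [in RHS](monalgE v) raddf_sum -sumrN; apply: eq_bigr => b _ /=.
rewrite mcoeffU -mulr_natr -mulrN; congr (_ * _).
by case: b => [[i|j]|[c' m]] /=; rewrite ?mcoeffN mcoeffU ?oppr0 //; case: c; case: c'.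
Qed.

Lemma modz3_cases (r : int) :
  [\/ r = 0 %[mod 3], r = 1 %[mod 3] | r = 2 %[mod 3]]%Z.
Proof.
have : (r %% 3 = 0 \/ r %% 3 = 1 \/ r %% 3 = 2)%Z by lia.
by case=> [|[]]; [exact: Or31 | exact: Or32 | exact: Or33].
Qed.

Lemma hp_mod r s : (r = s %[mod 3])%Z -> hp r = hp s.
Proof. by move=> e; rewrite /hp e. Qed.

Lemma hp0E j : hp 0 j = - hp 1 j - hp 2 j.
Proof. by rewrite /hp /=; case: ifP; rewrite // subr0 oppr0. Qed.

Lemma hp_at0 r : hp r 0 = 0.
Proof. by []. Qed.

Lemma hp_ndvd r j : ~~ (3 %| j)%N -> hp r j = 0.
Proof. by move=> j3; rewrite /hp (negbTE j3) andbF. Qed.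

Lemma hp1E n : hp 1 (3 * n.+1) = p1 n.
Proof. by rewrite /hp dvdn_mulr // muln_gt0 mulKn. Qed.

Lemma hp2E n : hp 2 (3 * n.+1) = bvec (inr (false, n)).
Proof. by rewrite /hp dvdn_mulr // muln_gt0 mulKn. Qed.

Lemma hsS j : hs F j.+1 = bvec (inl (inr j)).
Proof. by []. Qed.

(* Rewrites every hp a into hp 0, hp 1 or hp 2, letting lia find the residue
   of a from the hypotheses, and then eliminates hp 0. *)
Ltac hp_normalize := repeat match goal with
 | |- context [hp ?a] =>
   lazymatch a with
   | 0%Z => fail | 1%Z => fail | 2%Z => fail
   | _ => first [ rewrite (@hp_mod a 0); [|lia] | rewrite (@hp_mod a 1); [|lia]
                | rewrite (@hp_mod a 2); [|lia] ]
   end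
 end; rewrite ?hp0E.

Hypotheses (F2 : (2%:R : F) != 0) (F3 : (3%:R : F) != 0).

Lemma natr4_neq0 : (4%:R : F) != 0.
Proof. by rewrite (natrM F 2 2) mulf_neq0. Qed.

Lemma natr8_neq0 : (8%:R : F) != 0.
Proof. by rewrite (natrM F 2 4) mulf_neq0 ?natr4_neq0. Qed.

Ltac lincomb := lincomb_coef; field; by rewrite ?F2 ?F3 ?natr4_neq0 ?natr8_neq0.

Lemma hp_sum3E a j : hp a j = - hp (a + 1) j - hp (a + 2) j.
Proof. by case: (modz3_cases a) => e; hp_normalize; lincomb. Qed.

Lemma hmul_s_p r j n : sm j (hp r (3 * n)) =
  (3%:R / 4%:R) *: (hp r j + hp r (3 * n))
  - (3%:R / 8%:R) *: (hp r (absz_diff j (3 * n)%N) + hp r (j + 3 * n)).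
Proof.
case: j => [|j].
  have -> : absz_diff 0 (3 * n)%N = (3 * n)%N by rewrite /absz_diff; lia.
  rewrite hmul0l hp_at0 add0n; lincomb.
case: n => [|n].
  have -> : absz_diff j.+1 0 = j.+1 by rewrite /absz_diff; lia.
  rewrite muln0 hp_at0 linear0 addn0; lincomb.
rewrite hsS; case: (modz3_cases r) => /hp_mod->.
- rewrite !hp0E hp1E hp2E linearB linearN /= !hmul_bvec /= -hp1E -hp2E.
  hp_normalize; lincomb.
- by rewrite hp1E hmul_bvec /= -hp1E.
- by rewrite hp2E hmul_bvec /= -hp2E.
Qed.

Lemma hmul_a_p r i n : hmul (ha F i) (hp r (3 * n.+1)) =
  (3%:R / 2%:R) *: hp r (3 * n.+1) - hp (- (i + r)) (3 * n.+1).
Proof.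
rewrite /ha; case: (modz3_cases r) => e; rewrite (hp_mod e).
- rewrite !hp0E hp1E hp2E linearB linearN /= !hmul_bvec /= -hp1E -hp2E.
  rewrite (hp_sum3E (- (i + r))) (@hp_mod (- (i + r) + 1) (- (i + 2))); last by lia.
  rewrite (@hp_mod (- (i + r) + 2) (- (i + 1))); last by lia.
  lincomb.
- by rewrite hp1E hmul_bvec /= -hp1E (@hp_mod (- (i + r)) (- (i + 1))) //; lia.
- by rewrite hp2E hmul_bvec /= -hp2E (@hp_mod (- (i + r)) (- (i + 2))) //; lia.
Qed.

Lemma hmul_p_p c m r n : hmul (bvec (inr (c, m))) (hp r (3 * n.+1)) =
  4%:R^-1 *: (hz F (- (pidx c + r)) (3 * m.+1) + hz F (- (pidx c + r)) (3 * n.+1))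
  - 8%:R^-1 *: (hz F (- (pidx c + r)) (absz_diff (3 * m.+1)%N (3 * n.+1)%N)
                + hz F (- (pidx c + r)) (3 * m.+1 + 3 * n.+1)).
Proof.
rewrite /hz /pidx; case: c; case: (modz3_cases r) => e; rewrite [hp r](hp_mod e) ?hp0E;
  rewrite ?hp1E ?hp2E ?linearB ?linearN /= !hmul_bvec /= /hz /pidx -?hp1E -?hp2E;
  hp_normalize; lincomb.
Qed.

Definition is_p1 (b : HB) : bool := if b is inr (true, _) then true else false.

Definition P1 : {pred H} := [pred v | all is_p1 (msupp v)].

Lemma P1_supp v b : v \in P1 -> b \in msupp v -> exists n, b = inr (true, n).
Proof. by move=> /allP vP /vP; case: b => [//|[[] n] //]; exists n. Qed.

Lemma P1_submod_closed : submod_closed P1.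
Proof.
split=> [|a u v /allP uP /allP vP]; first by rewrite inE msupp0.
apply/allP => b /(fsubsetP (msuppD_le _ _)); rewrite inE => /orP[|/vP //].
by move/(fsubsetP (msuppZ_le _ _))/uP.
Qed.

HB.instance Definition _ := GRing.isSubmodClosed.Build F H P1 P1_submod_closed.

Lemma P1_p1 n : p1 n \in P1.
Proof. by rewrite inE msuppU oner_eq0; apply/allP => b; rewrite !inE => /eqP ->. Qed.

Lemma P1_hp1 m : hp 1 m \in P1.
Proof. by rewrite /hp; case: ifP => _; rewrite ?rpred0 ?P1_p1. Qed.

Lemma P1_coef_false y n : y \in P1 -> y@_(inr (false, n)) = 0.
Proof. by move=> yP; apply: mcoeff_outdom; apply/negP => /(P1_supp yP) [m]. Qed.

Lemma eq_in_P1 (f g : H -> H) : linear f -> linear g ->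
  (forall n, f (p1 n) = g (p1 n)) -> {in P1, f =1 g}.
Proof.
move=> fL gL fg v vP; rewrite (linextE fL) (linextE gL).
by apply: eq_big_seq => b /(P1_supp vP) [n ->]; rewrite fg.
Qed.

Lemma P1_stable (f : H -> H) : linear f ->
  (forall n, f (p1 n) \in P1) -> {in P1, forall v, f v \in P1}.
Proof.
move=> fL fP v vP; rewrite (linextE fL) /linext big_seq.
by apply: rpred_sum => b /(P1_supp vP) [n ->]; apply/rpredZ/fP.
Qed.

Definition pmap (r : int) : H -> H :=
  linext (fun b => if b is inr (true, n) then hp r (3 * n.+1) else 0).

HB.instance Definition _ r := GRing.Linear.copy (pmap r) (linext _).

Lemma pmapU r b :
  pmap r << b >> = if b is inr (true, n) then hp r (3 * n.+1) else 0.
Proof. exact: linextU. Qed.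

Lemma pmap_p1 r n : pmap r (p1 n) = hp r (3 * n.+1).
Proof. exact: pmapU. Qed.

Lemma pmap_hp1 r m : pmap r (hp 1 m) = hp r m.
Proof.
rewrite {1}/hp; case: ifP => [/andP[m0 m3] | m3]; last by rewrite linear0 /hp m3.
by rewrite /= pmap_p1 prednK ?divn_gt0 ?(dvdn_leq m0 m3) // mulnC divnK.
Qed.

Lemma pmap_mod r s : (r = s %[mod 3])%Z -> pmap r = pmap s.
Proof. by move=> e; rewrite /pmap (hp_mod e). Qed.

Lemma pmap0 v : pmap 0 v = - pmap 1 v - pmap 2 v.
Proof.
have L : linear (fun v => - pmap 1 v - pmap 2 v).
  by move=> a u w; rewrite !linearP /=; lincomb.
rewrite (linextE L); apply: eq_bigr => -[[i|j]|[[] n]] _ /=;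
  by rewrite !pmapU ?subr0 ?oppr0 ?hp0E.
Qed.

Lemma pmap1 : {in P1, pmap 1 =1 id}.
Proof. by apply: eq_in_P1 => [|//|n]; [exact: linearP | rewrite pmap_p1 hp1E]. Qed.

Lemma pmap2 : {in P1, forall y, pmap 2 y = - htau y}.
Proof.
apply: (@eq_in_P1 (pmap 2) (fun y => - htau y)) => [||n]; first exact: linearP.
  by move=> a u v; rewrite linearP /=; lincomb.
by rewrite pmap_p1 hp2E htau_bvec /= opprK.
Qed.

Definition zmap (r : int) (y : H) : H := pmap (r + 1) y - pmap (r - 1) y.

Lemma zmap_is_linear r : linear (zmap r).
Proof. by move=> a u v; rewrite /zmap !linearP /=; lincomb. Qed.

HB.instance Definition _ r :=
  GRing.isLinear.Build F H H *:%R (zmap r) (zmap_is_linear r).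

Lemma zmap_hp1 r m : zmap r (hp 1 m) = hz F r m.
Proof. by rewrite /zmap !pmap_hp1. Qed.

Lemma hmul_s_pmap j r : {in P1, forall y, sm j (pmap r y) = pmap r (sm j y)}.
Proof.
apply: (@eq_in_P1 (fun y => sm j (pmap r y)) (fun y => pmap r (sm j y))) => [||n].
- by move=> a u v; rewrite !linearP.
- by move=> a u v; rewrite !linearP.
rewrite pmap_p1 -hp1E !hmul_s_p.
by rewrite (raddfB (pmap r)) /= !(linearZ_LR (pmap r)) /= !(raddfD (pmap r)) /= !pmap_hp1.
Qed.

Lemma hmul_a_pmap i r : {in P1, forall y,
  hmul (ha F i) (pmap r y) = (3%:R / 2%:R) *: pmap r y - pmap (- (i + r)) y}.
Proof.
apply: (@eq_in_P1 (fun y => hmul (ha F i) (pmap r y))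
  (fun y => (3%:R / 2%:R) *: pmap r y - pmap (- (i + r)) y)) => [||n].
- by move=> a u v; rewrite !linearP.
- by move=> a u v; rewrite !linearP /=; lincomb.
by rewrite !pmap_p1 hmul_a_p.
Qed.

Lemma hmul_p_pmap c m r : {in P1, forall y,
  hmul (bvec (inr (c, m))) (pmap r y) = 3%:R^-1 *: zmap (- (pidx c + r)) (sm (3 * m.+1) y)}.
Proof.
apply: (@eq_in_P1 (fun y => hmul (bvec (inr (c, m))) (pmap r y))
  (fun y => 3%:R^-1 *: zmap (- (pidx c + r)) (sm (3 * m.+1) y))) => [||n].
- by move=> a u v; rewrite !linearP.
- by move=> a u v; rewrite !linearP.
rewrite pmap_p1 hmul_p_p -hp1E hmul_s_p.
rewrite (raddfB (zmap _)) /= !(linearZ_LR (zmap _)) /= !(raddfD (zmap _)) /= !zmap_hp1.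
lincomb.
Qed.

Lemma hmul_s_ndvd j : ~~ (3 %| j)%N -> {in P1, forall y, sm j y = (3%:R / 4%:R) *: y}.
Proof.
move=> j3; apply: (@eq_in_P1 (sm j) (fun y => (3%:R / 4%:R) *: y)) => [||n].
- exact: linearP.
- by move=> a u v; lincomb.
have [d3 s3] : ~~ (3 %| absz_diff j (3 * n.+1)%N)%N /\ ~~ (3 %| j + 3 * n.+1)%N.
  by split; apply: contra j3; rewrite /absz_diff; lia.
rewrite -hp1E hmul_s_p (hp_ndvd _ j3) (hp_ndvd _ d3) (hp_ndvd _ s3); lincomb.
Qed.

Lemma P1_hmul_s j : {in P1, forall y, sm j y \in P1}.
Proof.
apply: P1_stable => [|n]; first exact: linearP.
by rewrite -hp1E hmul_s_p rpredB ?rpredZ ?rpredD ?P1_hp1.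
Qed.

Lemma hmul_s_q a d : sm (3 * a) (q d) =
  (3%:R / 4%:R) *: (q a + q d) - (3%:R / 8%:R) *: (q (absz_diff a d) + q (a + d)).
Proof.
have e : absz_diff (3 * a)%N (3 * d)%N = (3 * absz_diff a d)%N by rewrite /absz_diff; lia.
by rewrite hmul_s_p mulnDr e.
Qed.

Lemma hmul_s_s_q a b d : sm (3 * a) (sm (3 * b) (q d)) =
  (3%:R / 4%:R) *: (sm (3 * a) (q d) + sm (3 * b) (q d))
  - (3%:R / 8%:R) *: (sm (3 * absz_diff a b) (q d) + sm (3 * (a + b)) (q d)).
Proof.
have := perm_big _ (perm_absz_diff3 a b d)
  (op := +%R) (x := 0 : H) (F := fun i => q i) (P := xpredT).
rewrite !big_cons !big_nil /= !addr0 => M.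
rewrite [sm (3 * b) _]hmul_s_q (raddfB (sm _)) /= !(linearZ_LR (sm _)) /=.
rewrite !(raddfD (sm _)) /= !hmul_s_q addnA.
have -> : q (absz_diff a (absz_diff b d)) = q (absz_diff (absz_diff a b) d)
    + (q (absz_diff a b + d) + q (absz_diff (a + b)%N d)) - q (a + absz_diff b d)
    - q (absz_diff a (b + d)%N).
  by rewrite -M; lincomb.
lincomb.
Qed.

Lemma hmul_s_s a b : {in P1, forall y, sm (3 * a) (sm (3 * b) y) =
  (3%:R / 4%:R) *: (sm (3 * a) y + sm (3 * b) y)
  - (3%:R / 8%:R) *: (sm (3 * absz_diff a b) y + sm (3 * (a + b)) y)}.
Proof.
apply: (@eq_in_P1 (fun y => sm (3 * a) (sm (3 * b) y))
  (fun y => (3%:R / 4%:R) *: (sm (3 * a) y + sm (3 * b) y)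
            - (3%:R / 8%:R) *: (sm (3 * absz_diff a b) y + sm (3 * (a + b)) y))) => [||n].
- by move=> c u v; rewrite !linearP.
- by move=> c u v; rewrite !linearP /=; lincomb.
by rewrite -hp1E hmul_s_s_q.
Qed.

Lemma htau_P1 : {in P1, forall y, htau y = hmul (ha F 0) y - (3%:R / 2%:R) *: y}.
Proof.
move=> y yP; rewrite -{2 3}(pmap1 yP) hmul_a_pmap // (@pmap_mod (- (0 + 1)) 2) //.
rewrite pmap2 //; lincomb.
Qed.

Lemma q_coef m n : (q m)@_(inr (true, n)) = (m == n.+1)%:R.
Proof.
case: m => [|m]; first by rewrite hp_at0 mcoeff0.
by rewrite hp1E mcoeffU.
Qed.

Section Ideal.
Variables (k : nat) (beta : nat -> F).
Hypotheses (k_gt0 : (0 < k)%N) (beta_k : beta k != 0).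

Let x : H := \sum_(1 <= j < k.+1) beta j *: q j.
Local Notation fam := (ideal_family x).

Definition sx (o : option nat) : H := if o is Some n then sm (3 * n.+1) x else x.

Lemma famE t : fam t = if t.1 then htau (sx t.2) else sx t.2.
Proof. by case: t => -[] []. Qed.

Lemma P1_x : x \in P1.
Proof. by apply: rpred_sum => j _; apply/rpredZ/P1_hp1. Qed.

Lemma P1_sx o : sx o \in P1.
Proof. by case: o => [n|]; [apply: P1_hmul_s|]; apply: P1_x. Qed.

Definition shifts_in_span (y : H) : Prop :=
  y \in P1 /\ forall r, span_seq fam (pmap r y).

Lemma shifts_in_spanD u v :
  shifts_in_span u -> shifts_in_span v -> shifts_in_span (u + v).
Proof.
move=> [uP su] [vP sv]; split=> [|r]; first exact: rpredD.
by rewrite linearD; apply: span_seqD (su r) (sv r).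
Qed.

Lemma shifts_in_spanZ a u : shifts_in_span u -> shifts_in_span (a *: u).
Proof.
move=> [uP su]; split=> [|r]; first exact: rpredZ.
by rewrite linearZ; apply: span_seqZ (su r).
Qed.

Lemma shifts_in_spanB u v :
  shifts_in_span u -> shifts_in_span v -> shifts_in_span (u - v).
Proof.
by move=> su sv; apply: shifts_in_spanD su _; rewrite -scaleN1r; apply: shifts_in_spanZ.
Qed.

Lemma shifts_sx o : shifts_in_span (sx o).
Proof.
have yP := P1_sx o; have fam0 : sx o = fam (false, o) by rewrite famE.
have fam1 : htau (sx o) = fam (true, o) by rewrite famE.
split=> // r; case: (modz3_cases r) => /pmap_mod->.
- rewrite pmap0 pmap1 // pmap2 // opprK fam0 fam1 -scaleN1r.
  by apply: span_seqD; [apply/span_seqZ/span_seq_f | apply: span_seq_f].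
- by rewrite pmap1 // fam0; apply: span_seq_f.
- by rewrite pmap2 // fam1 -scaleN1r; apply/span_seqZ/span_seq_f.
Qed.

Lemma shifts_sm3_x e : shifts_in_span (sm (3 * e) x).
Proof.
case: e => [|n]; last exact: (shifts_sx (Some n)).
rewrite muln0 hmul0l; split=> [|r]; first exact: rpred0.
by rewrite linear0; apply: span_seq0.
Qed.

Lemma shifts_sm_sx j o : shifts_in_span (sm j (sx o)).
Proof.
have [/dvdnP[e ->] | j3] := boolP (3 %| j)%N; last first.
  by rewrite (hmul_s_ndvd j3 (P1_sx o)); apply/shifts_in_spanZ/shifts_sx.
rewrite mulnC; case: o => [n|]; last exact: shifts_sm3_x.
rewrite /= hmul_s_s ?P1_x //.
by apply/shifts_in_spanB; apply/shifts_in_spanZ/shifts_in_spanD; apply: shifts_sm3_x.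
Qed.

Lemma span_hmul_pmap b r o : span_seq fam (hmul (bvec b) (pmap r (sx o))).
Proof.
have [_ sy] := shifts_sx o; have sj j := (shifts_sm_sx j o).2.
case: b => [[i|j]|[c m]].
- by rewrite hmul_a_pmap ?P1_sx //; apply: span_seqB; [apply: span_seqZ|].
- by rewrite -hsS hmul_s_pmap ?P1_sx.
by rewrite hmul_p_pmap ?P1_sx //; apply/span_seqZ/span_seqB.
Qed.

Lemma span_hmul_fam v t : span_seq fam (hmul v (fam t)).
Proof.
rewrite hmul_linextl; apply: span_seq_sum => b; apply: span_seqZ.
rewrite famE; case: t.1; last by rewrite -[sx _](pmap1 (P1_sx _)); apply: span_hmul_pmap.
rewrite -[htau _]opprK -(pmap2 (P1_sx _)) linearN -scaleN1r.
by apply/span_seqZ/span_hmul_pmap.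
Qed.

Lemma span_is_ideal : is_ideal (span_seq fam).
Proof.
split; [exact: span_seq0 | exact: span_seqD | exact: span_seqZ |].
move=> u v [L ->]; rewrite linear_sum; apply: span_seq_sum => p.
by rewrite linearZ; apply/span_seqZ/span_hmul_fam.
Qed.

Lemma span_x : span_seq fam x.
Proof. exact: (span_seq_f fam (false, None)). Qed.

Lemma gen_ideal_span y : span_seq fam y -> gen_ideal x y.
Proof.
move=> [L ->] J [J0 JD JZ JM] Jx.
have Jsx o : J (sx o) by case: o => [n|] //=; apply: JM.
have Jfam t : J (fam t).
  rewrite famE; case: t.1 => //; rewrite htau_P1 ?P1_sx //.
  by apply: JD; [apply: JM | rewrite -scaleNr; apply: JZ].
by apply: big_ind => // p _; apply: JZ.
Qed.

Lemma sum_top (w : nat -> F) : (forall j, (0 < j < k)%N -> w j = 0) ->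
  \sum_(1 <= j < k.+1) beta j * w j = beta k * w k.
Proof.
move=> w0; rewrite big_nat_recr //= big_nat big1 ?add0r // => j jk.
by rewrite w0 ?mulr0.
Qed.

Lemma x_coef n : (k.-1 <= n)%N -> x@_(inr (true, n)) = if n == k.-1 then beta k else 0.
Proof.
move=> kn; rewrite raddf_sum.
under eq_bigr do rewrite /= mcoeffZ q_coef.
rewrite sum_top => [|j /andP[_ jk]]; last by rewrite (_ : j == n.+1 = false) ?mulr0 //; lia.
rewrite (_ : (k == n.+1) = (n == k.-1)); last by apply/eqP/eqP; lia.
by case: eqP; rewrite ?mulr1 ?mulr0.
Qed.

Lemma sm_x_coef m n : (m + k <= n)%N ->
  (sm (3 * m.+1) x)@_(inr (true, n)) =
  if n == (m + k)%N then - (3%:R / 8%:R) * beta k else 0.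
Proof.
move=> kn; rewrite linear_sum raddf_sum.
under eq_bigr do rewrite /= linearZ /= hmul_s_q mcoeffZ !(mcoeffB, mcoeffD, mcoeffZ) !q_coef.
have low j : (j <= k)%N -> [&& m.+1 != n.+1, j != n.+1 & absz_diff m.+1 j != n.+1].
  by move=> jk; rewrite /absz_diff; apply/and3P; split; apply/eqP; lia.
rewrite sum_top => [|j /andP[j0 jk]]; last first.
  have /and3P[/negbTE-> /negbTE-> /negbTE->] := low j (ltnW jk).
  by rewrite (_ : (m.+1 + j == n.+1)%N = false) ?addr0 ?mulr0 ?subrr //; apply/eqP; lia.
have /and3P[/negbTE-> /negbTE-> /negbTE->] := low k (leqnn k).
rewrite (_ : (m.+1 + k == n.+1)%N = (n == m + k)%N); last by apply/eqP/eqP; lia.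
by case: eqP => _ /=; ring.
Qed.

Definition sx_deg (o : option nat) : nat := if o is Some m then (m + k)%N else k.-1.

Definition sx_lead_coef (o : option nat) : F :=
  if o is Some _ then - (3%:R / 8%:R) * beta k else beta k.

Lemma sx_deg_inj : injective sx_deg.
Proof. by case=> [m|] [m'|] //= e; [rewrite (addIn e) | lia | lia]. Qed.

Lemma sx_coef o n : (sx_deg o <= n)%N ->
  (sx o)@_(inr (true, n)) = if n == sx_deg o then sx_lead_coef o else 0.
Proof. by case: o => [m|]; [apply: sm_x_coef | apply: x_coef]. Qed.

Lemma sx_lead_coef_neq0 o : sx_lead_coef o != 0.
Proof.
by case: o => [m|] //=; rewrite mulf_neq0 // oppr_eq0 mulf_neq0 ?invr_eq0 ?natr8_neq0.
Qed.

Lemma fam_coef t t' : (sx_deg t.2 <= sx_deg t'.2)%N ->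
  (fam t)@_(inr (~~ t'.1, sx_deg t'.2)) =
  if t == t' then (-1) ^+ t.1 * sx_lead_coef t.2 else 0.
Proof.
case: t t' => [b o] [b' o'] /= le; rewrite famE /= xpair_eqE.
rewrite -(inj_eq sx_deg_inj) [_ == sx_deg o']eq_sym.
case: b b' => [] []; rewrite ?htau_coef /= ?P1_coef_false ?oppr0 ?andbF ?andFb ?P1_sx //.
  by rewrite sx_coef //; case: eqP; rewrite ?mulN1r ?oppr0 //= expr1.
by rewrite sx_coef //; case: eqP; rewrite ?mul1r //= expr0 mul1r.
Qed.

Lemma fam_lin_indep : lin_indep fam.
Proof.
apply: (@triangular_lin_indep _ _ _ (fun t => inr (~~ t.1, sx_deg t.2)) (fun t => sx_deg t.2)).
  move=> t; rewrite fam_coef // eqxx mulf_neq0 ?sx_lead_coef_neq0 //.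
  by rewrite expf_neq0 // oppr_eq0 oner_eq0.
by move=> t t' /negbTE tt' le; rewrite fam_coef // tt'.
Qed.

End Ideal.

End Highwater.

Unset Implicit Arguments.

Theorem theorem7p2 (F : fieldType) (hchar2 : (2%:R : F) != 0)
  (hchar3 : (3%:R : F) != 0) (k : nat) (hk : (0 < k)%N)
  (beta : nat -> F) (hbeta : beta k != 0) :
  let x : Hh F := \sum_(1 <= j < k.+1) beta j *: hp F 1 (3 * j) in
  is_basis_of_ideal (ideal_family x) x.
Proof.
move=> x; split; first exact: (fam_lin_indep hchar2 hchar3 hk hbeta).
move=> y; rewrite in_spanP; split; first exact: gen_ideal_span.
by move/(_ _ (span_is_ideal hchar2 hchar3 k beta) (span_x k beta)).
Qed.
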